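(* Let $n,m\in\mathbb{N}$ be fixed. For all $X,Y\in \mathrm{IS}^{\mathrm{br}}_{n,m}$: $X \approx_{\mathrm{sa}} Y$ only if there exists an $l\in\mathbb{N}$ such that for all $b'_1,\ldots,b'_l\in\{0,1\}$ there exist $b''_1,\ldots,b''_l\in\{0,1\}$ such that for all $b_1,\ldots,b_n\in\{0,1\}$, writing $I=\{\mathrm{in}_i.\mathrm{BR}_{b_i}\mid 1\le i\le n\}$, $A'=\{\mathrm{aux}_i.\mathrm{BR}_{b'_i}\mid 1\le i\le l\}$, $A''=\{\mathrm{aux}_i.\mathrm{BR}_{b''_i}\mid 1\le i\le l\}$ and $O=\{\mathrm{out}_i.\mathrm{BR}_{0}\mid 1\le i\le m\}$: $$\mathrm{apply}(\mathrm{use}(|X|, I\cup A'),\,O)=\mathrm{apply}(\mathrm{use}(|Y|, I\cup A''),\,O)$$ and $$\mathrm{depth}\big(\mathrm{tuse}(\mathrm{tuse}(|X|, I\cup A'),\,O)\big)=\mathrm{depth}\big(\mathrm{tuse}(\mathrm{tuse}(|Y|, I\cup A''),\,O)\big).$$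
   Context: Foci (register names) are $\mathrm{in}_i,\mathrm{aux}_i,\mathrm{out}_i$ for $i\ge1$; methods are $\mathrm{set}{:}0,\mathrm{set}{:}1,\mathrm{get}$. The basic instructions are $\mathrm{BI}_{n,m}=\{f.\mathrm{get}\mid f\in\{\mathrm{in}_1..\mathrm{in}_n\}\cup\{\mathrm{aux}_i\mid i\ge1\}\}\cup\{f.\mathrm{set}{:}b\mid f\in\{\mathrm{aux}_i\mid i\ge1\}\cup\{\mathrm{out}_1..\mathrm{out}_m\},b\in\{0,1\}\}$; $\mathrm{focus}(f.m)=f$. Primitive instructions: for $a\in\mathrm{BI}_{n,m}$ the plain instruction $a$, positive test $+a$, negative test $-a$; forward jumps $\#l$ ($l\in\mathbb{N}$); termination $!$. $\mathrm{IS}^{\mathrm{br}}_{n,m}$ is the set of finite nonempty sequences of primitive instructions, written $u_1;\dots;u_k$. Threads: finite terms built from $\mathsf{S}$ (termination), $\mathsf{D}$ (inaction) and postconditional composition $x\trianglelefteq a\trianglerighteq y$ for basic actions $a$, where basic actions are the $f.m$ and also the trace actions $\langle f.m\rangle r$ ($r\in\{0,1\}$); threads are equal iff syntactically equal; $a\circ x$ abbreviates $x\trianglelefteq a\trianglerighteq x$. $\mathrm{depth}(\mathsf S)=\mathrm{depth}(\mathsf D)=0$, $\mathrm{depth}(x\trianglelefteq a\trianglerighteq y)=\max(\mathrm{depth}(x),\mathrm{depth}(y))+1$. Thread extraction $|\cdot|$ ($u$ primitive, $X$ a nonempty sequence): $|a|=a\circ\mathsf D$, $|a;X|=a\circ|X|$,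 $|{+a}|=|{-a}|=a\circ\mathsf D$, $|{+a};X|=|X|\trianglelefteq a\trianglerighteq|\#2;X|$, $|{-a};X|=|\#2;X|\trianglelefteq a\trianglerighteq|X|$, $|\#l|=\mathsf D$, $|\#0;X|=\mathsf D$, $|\#1;X|=|X|$, $|\#(l+2);u|=\mathsf D$, $|\#(l+2);u;X|=|\#(l+1);X|$, $|!|=|!;X|=\mathsf S$. (Execution: tests run $a$ and skip the next instruction if the reply is $0$ for $+a$, $1$ for $-a$.) A register family $F$ is a finite set of pairs $f.\mathrm{BR}_b$ ($b\in\{0,1\}$, Boolean register named $f$ with content $b$) with pairwise distinct foci; $\emptyset$ is the empty family. Processing method $m$ on $\mathrm{BR}_b$: $\mathrm{set}{:}c$ gives reply $c$ and new content $c$; $\mathrm{get}$ gives reply $b$ and leaves content $b$. If $f.\mathrm{BR}_b\in F$ and $m$ yields reply $r$ and new content $b'$, let $F'$ be $F$ with $f.\mathrm{BR}_b$ replaced by $f.\mathrm{BR}_{b'}$. Abstracting use: $\mathrm{use}(\mathsf S,F)=\mathsf S$, $\mathrm{use}(\mathsf D,F)=\mathsf D$; if $f$ is not a focus in $F$, $\mathrm{use}(x\trianglelefteq f.m\trianglerighteq y,F)=\mathrm{use}(x,F)\trianglelefteq f.m\trianglerighteq\mathrm{use}(y,F)$; otherwise it equals $\mathrm{use}(x,F')$ if $r=1$ and $\mathrm{use}(y,F')$ if $r=0$; $\mathrm{use}(x\trianglelefteq\langle f.m\rangle r\trianglerighteq y,F)=\langle f.m\rangle r\circ\mathrm{use}(x,F)$.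 Apply (result is a register family): $\mathrm{apply}(\mathsf S,F)=F$, $\mathrm{apply}(\mathsf D,F)=\emptyset$; if $f$ not a focus in $F$, $\mathrm{apply}(x\trianglelefteq f.m\trianglerighteq y,F)=\emptyset$; otherwise it equals $\mathrm{apply}(x,F')$ if $r=1$, $\mathrm{apply}(y,F')$ if $r=0$; $\mathrm{apply}(x\trianglelefteq\langle f.m\rangle r\trianglerighteq y,F)=\mathrm{apply}(x,F)$. Tracking use: $\mathrm{tuse}(\mathsf S,F)=\mathsf S$, $\mathrm{tuse}(\mathsf D,F)=\mathsf D$; if $f$ not a focus in $F$, $\mathrm{tuse}(x\trianglelefteq f.m\trianglerighteq y,F)=\mathrm{tuse}(x,F)\trianglelefteq f.m\trianglerighteq\mathrm{tuse}(y,F)$; otherwise it equals $\langle f.m\rangle 1\circ\mathrm{tuse}(x,F')$ if $r=1$ and $\langle f.m\rangle 0\circ\mathrm{tuse}(y,F')$ if $r=0$; $\mathrm{tuse}(x\trianglelefteq\langle f.m\rangle r\trianglerighteq y,F)=\langle f.m\rangle r\circ\mathrm{tuse}(x,F)$. Equivalences on $\mathrm{IS}^{\mathrm{br}}_{n,m}$: (i) $X\approx_{\mathrm b}Y$ iff $|X|=|Y|$. (ii) $X\approx_{\mathrm x}Y$ iff $Y=\chi_I(X)$ for some finite $I\subset\mathbb{N}_{>0}$, where $\chi_I$ acts instruction-wise: for $f=\mathrm{aux}_i$ with $i\in I$, $f.m\mapsto f.\chi''(m)$, $+f.m\mapsto -f.\chi''(m)$, $-f.m\mapsto +f.\chi''(m)$,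 with $\chi''$ swapping $\mathrm{set}{:}0$ and $\mathrm{set}{:}1$ and fixing $\mathrm{get}$; all other instructions unchanged. (iii) $X\approx_{\mathrm r}Y$ iff $Y=\rho_r(X)$ for some bijection $r$ of $\mathbb{N}_{>0}$, where $\rho_r$ replaces instruction-wise every focus $\mathrm{aux}_i$ by $\mathrm{aux}_{r(i)}$ (in plain, positive and negative test instructions) and leaves everything else unchanged. (iv) $X\approx_{\mathrm t}Y$ iff $|X|\approx'_{\mathrm t}|Y|$, where $\approx'_{\mathrm t}$ is the smallest relation on finite threads over $\mathrm{BI}_{n,m}$ such that: if $\mathrm{focus}(a)\ne\mathrm{focus}(b)$ then $(x\trianglelefteq b\trianglerighteq y)\trianglelefteq a\trianglerighteq(x'\trianglelefteq b\trianglerighteq y')\approx'_{\mathrm t}(x\trianglelefteq a\trianglerighteq x')\trianglelefteq b\trianglerighteq(y\trianglelefteq a\trianglerighteq y')$; it is reflexive and transitive; and $x\approx'_{\mathrm t}x'$, $y\approx'_{\mathrm t}y'$ imply $x\trianglelefteq a\trianglerighteq y\approx'_{\mathrm t}x'\trianglelefteq a\trianglerighteq y'$. The structural algorithmic equivalence $\approx_{\mathrm{sa}}$ is the smallest relation containing $\approx_{\mathrm b},\approx_{\mathrm x},\approx_{\mathrm r},\approx_{\mathrm t}$ and closed under transitivity. *)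

From Stdlib Require Import Arith List Bool.
Import ListNotations.

(* Register indices are natural numbers; only indices >= 1 are meaningful
   (in_i, aux_i, out_i for i >= 1), enforced by [basic_ok] below. *)
Inductive focus : Type :=
| In  (i : nat)
| Aux (i : nat)
| Out (i : nat).

Definition focus_eq_dec (f g : focus) : {f = g} + {f <> g}.
Proof. decide equality; apply Nat.eq_dec. Defined.

(* set:b (b = false is set:0, b = true is set:1) and get *)
Inductive method : Type :=
| MSet (b : bool)
| MGet.

Definition basic_ok (n m : nat) (f : focus) (meth : method) : Prop :=
  match f, meth with
  | In i,  MGet    => 1 <= i <= n
  | In _,  MSet _  => False
  | Aux i, _       => 1 <= i
  | Out i, MSet _  => 1 <= i <= m
  | Out _, MGet    => False
  end.

Inductive instr : Type :=
| Plain (f : focus) (meth : method)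
| PTest (f : focus) (meth : method)
| NTest (f : focus) (meth : method)
| Jump  (l : nat)
| Term.

Definition instr_ok (n m : nat) (u : instr) : Prop :=
  match u with
  | Plain f meth | PTest f meth | NTest f meth => basic_ok n m f meth
  | Jump _ | Term => True
  end.

Definition IS (n m : nat) (X : list instr) : Prop :=
  X <> [] /\ Forall (instr_ok n m) X.

Inductive action : Type :=
| Act   (f : focus) (meth : method)
| Trace (f : focus) (meth : method) (r : bool).

Inductive thread : Type :=
| TS                                       (* S : termination *)
| TD                                       (* D : inaction    *)
| Pc (x : thread) (a : action) (y : thread).

Definition pre (a : action) (x : thread) : thread := Pc x a x.

Fixpoint depth (x : thread) : nat :=
  match x with
  | TS | TD => 0
  | Pc x _ y => Nat.max (depth x) (depth y) + 1
  end.

(* [ext X] = |X| for nonempty X ([ext []] is an unused default).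
   The local function [jmp l Y] computes |#l;Y| following the equations
   |#0;Y| = D, |#1;Y| = |Y|, |#(l+2);u| = D, |#(l+2);u;Y| = |#(l+1);Y|,
   and |#l| = D (case Y = []). *)
Fixpoint ext (X : list instr) : thread :=
  match X with
  | [] => TD
  | u :: X' =>
    let fix jmp (l : nat) (Y : list instr) {struct Y} : thread :=
      match Y with
      | [] => TD
      | v :: Y' =>
        match l with
        | 0 => TD
        | 1 => ext Y
        | S (S l') => jmp (S l') Y'
        end
      end in
    match u with
    | Plain f meth =>
        match X' with [] => pre (Act f meth) TD | _ => pre (Act f meth) (ext X') end
    | PTest f meth =>
        match X' with [] => pre (Act f meth) TD
                    | _ => Pc (ext X') (Act f meth) (jmp 2 X') end
    | NTest f meth =>
        match X' with [] => pre (Act f meth) TD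
                    | _ => Pc (jmp 2 X') (Act f meth) (ext X') end
    | Jump l => jmp l X'
    | Term => TS
    end
  end.

(* A register family is represented by the partial map sending a focus f to
   [Some b] iff f.BR_b is in the family (foci are pairwise distinct, so this
   is a faithful representation); the empty family maps everything to None.
   Equality of families is equality of these maps. *)
Definition regfam := focus -> option bool.

Definition empty_fam : regfam := fun _ => None.

Definition upd (F : regfam) (f : focus) (b : bool) : regfam :=
  fun g => if focus_eq_dec g f then Some b else F g.

(* processing a method on BR_b: (reply, new content) *)
Definition proc (meth : method) (b : bool) : bool * bool :=
  match meth with
  | MSet c => (c, c)
  | MGet => (b, b)
  end.

Fixpoint use (x : thread) (F : regfam) : thread :=
  match x with
  | TS => TS
  | TD => TD
  | Pc x (Act f meth) y =>
      match F f with
      | None => Pc (use x F) (Act f meth) (use y F)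
      | Some b =>
          let (r, b') := proc meth b in
          if r then use x (upd F f b') else use y (upd F f b')
      end
  | Pc x (Trace f meth r) _ => pre (Trace f meth r) (use x F)
  end.

Fixpoint apply (x : thread) (F : regfam) : regfam :=
  match x with
  | TS => F
  | TD => empty_fam
  | Pc x (Act f meth) y =>
      match F f with
      | None => empty_fam
      | Some b =>
          let (r, b') := proc meth b in
          if r then apply x (upd F f b') else apply y (upd F f b')
      end
  | Pc x (Trace _ _ _) _ => apply x F
  end.

Fixpoint tuse (x : thread) (F : regfam) : thread :=
  match x with
  | TS => TS
  | TD => TD
  | Pc x (Act f meth) y =>
      match F f with
      | None => Pc (tuse x F) (Act f meth) (tuse y F)
      | Some b =>
          let (r, b') := proc meth b in
          if r then pre (Trace f meth true) (tuse x (upd F f b'))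
          else pre (Trace f meth false) (tuse y (upd F f b'))
      end
  | Pc x (Trace f meth r) _ => pre (Trace f meth r) (tuse x F)
  end.

Definition swap_set (meth : method) : method :=
  match meth with MSet b => MSet (negb b) | MGet => MGet end.

Definition chi_instr (I : list nat) (u : instr) : instr :=
  match u with
  | Plain (Aux i) meth => if in_dec Nat.eq_dec i I then Plain (Aux i) (swap_set meth) else u
  | PTest (Aux i) meth => if in_dec Nat.eq_dec i I then NTest (Aux i) (swap_set meth) else u
  | NTest (Aux i) meth => if in_dec Nat.eq_dec i I then PTest (Aux i) (swap_set meth) else u
  | _ => u
  end.

Definition chi (I : list nat) (X : list instr) : list instr := map (chi_instr I) X.

Definition rho_focus (r : nat -> nat) (f : focus) : focus :=
  match f with Aux i => Aux (r i) | _ => f end.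

Definition rho_instr (r : nat -> nat) (u : instr) : instr :=
  match u with
  | Plain f meth => Plain (rho_focus r f) meth
  | PTest f meth => PTest (rho_focus r f) meth
  | NTest f meth => NTest (rho_focus r f) meth
  | _ => u
  end.

Definition rho (r : nat -> nat) (X : list instr) : list instr := map (rho_instr r) X.

Definition bij_pos (r : nat -> nat) : Prop :=
  (forall i, 0 < i -> 0 < r i) /\
  (forall i j, 0 < i -> 0 < j -> r i = r j -> i = j) /\
  (forall j, 0 < j -> exists i, 0 < i /\ r i = j).

Definition act_focus (a : action) : focus :=
  match a with Act f _ | Trace f _ _ => f end.

Definition act_ok (n m : nat) (a : action) : Prop :=
  match a with Act f meth => basic_ok n m f meth | Trace _ _ _ => False end.

Inductive teq (n m : nat) : thread -> thread -> Prop :=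
| teq_swap (a b : action) (x y x' y' : thread) :
    act_ok n m a -> act_ok n m b -> act_focus a <> act_focus b ->
    teq n m (Pc (Pc x b y) a (Pc x' b y'))
            (Pc (Pc x a x') b (Pc y a y'))
| teq_refl (x : thread) : teq n m x x
| teq_trans (x y z : thread) : teq n m x y -> teq n m y z -> teq n m x z
| teq_cong (a : action) (x x' y y' : thread) :
    act_ok n m a -> teq n m x x' -> teq n m y y' ->
    teq n m (Pc x a y) (Pc x' a y').

Inductive sa_equiv (n m : nat) : list instr -> list instr -> Prop :=
| sa_b (X Y : list instr) :
    IS n m X -> IS n m Y -> ext X = ext Y -> sa_equiv n m X Y
| sa_x (X Y : list instr) (I : list nat) :
    IS n m X -> IS n m Y -> (forall i, List.In i I -> 0 < i) -> Y = chi I X ->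
    sa_equiv n m X Y
| sa_r (X Y : list instr) (r : nat -> nat) :
    IS n m X -> IS n m Y -> bij_pos r -> Y = rho r X -> sa_equiv n m X Y
| sa_t (X Y : list instr) :
    IS n m X -> IS n m Y -> teq n m (ext X) (ext Y) -> sa_equiv n m X Y
| sa_trans (X Y Z : list instr) :
    sa_equiv n m X Y -> sa_equiv n m Y Z -> sa_equiv n m X Z.

Definition fam_IA (n l : nat) (b c : nat -> bool) : regfam :=
  fun f => match f with
  | In i  => if (1 <=? i) && (i <=? n) then Some (b i) else None
  | Aux i => if (1 <=? i) && (i <=? l) then Some (c i) else None
  | Out _ => None
  end.

Definition fam_O (m : nat) : regfam :=
  fun f => match f with
  | Out i => if (1 <=? i) && (i <=? m) then Some false else None
  | _ => None
  end.

(* Each generating equivalence preserves the final register family and the depth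
   of the tracked run, once the initial families are suitably related: ~b
   trivially, ~t because two tests on distinct registers commute, ~x after
   complementing the flipped auxiliary registers, and ~r after permuting them
   along r.  Taking l beyond every auxiliary index occurring in the programs makes
   the related family again of the form I u A'', and such witnesses compose along
   chains of equivalences.  Finally, using I u A and then O is a single run on the
   union, read off on the output registers. *)

From Stdlib Require Import Arith List Bool Lia FunctionalExtensionality.
Import ListNotations.

Fixpoint ext_jump (l : nat) (X : list instr) : thread :=
  match X with
  | [] => TD
  | _ :: X' => match l with 0 => TD | 1 => ext X | S (S l') => ext_jump (S l') X' end
  end.

(* |+a| = a o D coincides with |+a;X| read with |X| = |#2;X| = D, so the
   one-instruction cases need no special treatment. *)
Lemma ext_cons u X :
  ext (u :: X) =
  match u with
  | Plain f meth => pre (Act f meth) (ext X)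
  | PTest f meth => Pc (ext X) (Act f meth) (ext_jump 2 X)
  | NTest f meth => Pc (ext_jump 2 X) (Act f meth) (ext X)
  | Jump l => ext_jump l X
  | Term => TS
  end.
Proof. destruct u, X; reflexivity. Qed.

Fixpoint foci_in (R : focus -> Prop) (x : thread) : Prop :=
  match x with
  | TS | TD => True
  | Pc x a y =>
      match a with Act f _ => R f | Trace _ _ _ => True end /\ foci_in R x /\ foci_in R y
  end.

Definition instr_foci_in (R : focus -> Prop) (u : instr) : Prop :=
  match u with Plain f _ | PTest f _ | NTest f _ => R f | _ => True end.

Lemma ext_jump_foci_in R X :
  Forall (instr_foci_in R) X -> foci_in R (ext X) /\ forall l, foci_in R (ext_jump l X).
Proof.
  induction X as [|u X IH]; intros HX; [split; [|intros [|[|l]]]; exact I|].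
  inversion HX as [|? ? Hu HX']; subst.
  destruct (IH HX') as [He Hj].
  assert (Hc : foci_in R (ext (u :: X))).
  { rewrite ext_cons. destruct u; cbn [instr_foci_in] in Hu; unfold pre; cbn [foci_in]; auto. }
  split; [exact Hc|]. intros [|[|l]]; [exact I|exact Hc|apply Hj].
Qed.

Lemma ext_foci_in R X : Forall (instr_foci_in R) X -> foci_in R (ext X).
Proof. intros HX; exact (proj1 (ext_jump_foci_in R X HX)). Qed.

Lemma Forall_instr_foci_in_impl (P Q : focus -> Prop) X :
  (forall f, P f -> Q f) -> Forall (instr_foci_in P) X -> Forall (instr_foci_in Q) X.
Proof. intros HPQ. apply Forall_impl. intros []; cbn; auto. Qed.

Lemma upd_neq F f c g : g <> f -> upd F f c g = F g.
Proof. intros H; unfold upd; destruct focus_eq_dec; congruence. Qed.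

Lemma upd_eq F f c : upd F f c f = Some c.
Proof. unfold upd; destruct focus_eq_dec; congruence. Qed.

Lemma upd_comm F f g c d : f <> g -> upd (upd F f c) g d = upd (upd F g d) f c.
Proof. intros H; extensionality k; unfold upd; repeat destruct focus_eq_dec; congruence. Qed.

Lemma proc_swap_set meth c :
  proc (swap_set meth) (negb c) = let (r, c') := proc meth c in (negb r, negb c').
Proof. destruct meth; reflexivity. Qed.

(* A common generalisation of chi_I (tau marks the registers whose contents are
   complemented) and of rho_r (phi renames foci). *)
Section Relabel.
Variable phi : focus -> focus.
Variable tau : focus -> bool.

Definition relabel_instr (u : instr) : instr :=
  match u with
  | Plain f meth => Plain (phi f) (if tau f then swap_set meth else meth)
  | PTest f meth => if tau f then NTest (phi f) (swap_set meth) else PTest (phi f) meth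
  | NTest f meth => if tau f then PTest (phi f) (swap_set meth) else NTest (phi f) meth
  | _ => u
  end.

Fixpoint relabel (x : thread) : thread :=
  match x with
  | TS => TS
  | TD => TD
  | Pc x (Act f meth) y =>
      if tau f then Pc (relabel y) (Act (phi f) (swap_set meth)) (relabel x)
      else Pc (relabel x) (Act (phi f) meth) (relabel y)
  | Pc x a y => Pc (relabel x) a (relabel y)
  end.

Lemma ext_relabel_jump X :
  ext (map relabel_instr X) = relabel (ext X) /\
  forall l, ext_jump l (map relabel_instr X) = relabel (ext_jump l X).
Proof.
  induction X as [|u X [IHe IHj]]; [split; [|intros [|[|l]]]; reflexivity|].
  assert (He : ext (map relabel_instr (u :: X)) = relabel (ext (u :: X))).
  { cbn [map].
    destruct u as [f meth|f meth|f meth|l|]; cbn [relabel_instr];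
      try (destruct (tau f) eqn:Ht; rewrite !ext_cons; unfold pre; cbn [relabel];
           rewrite Ht, IHe, ?IHj; reflexivity).
    - rewrite !ext_cons; apply IHj.
    - reflexivity. }
  split; [exact He|]. intros [|[|l]]; [reflexivity|exact He|apply IHj].
Qed.

Lemma ext_relabel X : ext (map relabel_instr X) = relabel (ext X).
Proof. exact (proj1 (ext_relabel_jump X)). Qed.

Variable R : focus -> Prop.
Hypothesis phi_inj : forall f g, R f -> R g -> phi f = phi g -> f = g.

Definition relabels (G G' : regfam) : Prop :=
  forall f, R f -> G' (phi f) = option_map (xorb (tau f)) (G f).

Lemma relabels_upd G G' f c :
  R f -> relabels G G' -> relabels (upd G f c) (upd G' (phi f) (xorb (tau f) c)).
Proof.
  intros Hf HG g Hg. destruct (focus_eq_dec g f) as [->|ne].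
  - rewrite !upd_eq; reflexivity.
  - rewrite !upd_neq; [apply HG; exact Hg|exact ne|].
    intros E; apply ne, phi_inj; assumption.
Qed.

Lemma relabel_sem x : forall G G',
  foci_in R x -> relabels G G' ->
  relabels (apply x G) (apply (relabel x) G') /\
  depth (tuse (relabel x) G') = depth (tuse x G).
Proof.
  induction x as [| |x IHx [f meth|f meth r] y IHy]; intros G G' Hx HG.
  - split; [exact HG|reflexivity].
  - split; [intros f _; reflexivity|reflexivity].
  - destruct Hx as [Hf [Hx Hy]].
    assert (E := HG f Hf). cbn [relabel].
    destruct (G f) as [c|] eqn:Gf.
    + destruct (proc meth c) as [r c'] eqn:Hp.
      assert (HG' := relabels_upd G G' f c' Hf HG).
      destruct (tau f); cbn [apply tuse]; rewrite E, Gf, Hp; cbn [option_map].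
      * change (xorb true c') with (negb c') in HG'.
        change (xorb true c) with (negb c); rewrite proc_swap_set, Hp.
        destruct r; cbn [negb pre depth];
          [destruct (IHx _ _ Hx HG')|destruct (IHy _ _ Hy HG')];
          (split; [assumption|congruence]).
      * change (xorb false c') with c' in HG'.
        change (xorb false c) with c; rewrite Hp.
        destruct r; cbn [pre depth];
          [destruct (IHx _ _ Hx HG')|destruct (IHy _ _ Hy HG')];
          (split; [assumption|congruence]).
    + destruct (tau f); cbn [apply tuse depth]; rewrite E, Gf; cbn [option_map depth];
        rewrite (proj2 (IHx G G' Hx HG)), (proj2 (IHy G G' Hy HG));
        split; try (intros g _; reflexivity); lia.
  - destruct Hx as [_ [Hx _]]. cbn [relabel apply tuse pre depth].
    destruct (IHx G G' Hx HG); split; [assumption|congruence].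
Qed.
End Relabel.

Lemma swap_sem f meth g k x y x' y' G : f <> g ->
  let lhs := Pc (Pc x (Act g k) y) (Act f meth) (Pc x' (Act g k) y') in
  let rhs := Pc (Pc x (Act f meth) x') (Act g k) (Pc y (Act f meth) y') in
  apply lhs G = apply rhs G /\ depth (tuse lhs G) = depth (tuse rhs G).
Proof.
  intros Hfg lhs rhs; subst lhs rhs; cbn [apply tuse].
  destruct (G f) as [c|] eqn:Ef; destruct (G g) as [d|] eqn:Eg.
  - destruct (proc meth c) as [r c'] eqn:Pf; destruct (proc k d) as [s d'] eqn:Pg.
    destruct r, s; cbn [apply tuse pre depth];
      rewrite ?upd_neq by congruence; rewrite ?Ef, ?Eg, ?Pf, ?Pg;
      rewrite (upd_comm G f g) by congruence; split; try reflexivity; cbn [depth]; lia.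
  - destruct (proc meth c) as [r c'] eqn:Pf.
    destruct r; cbn [apply tuse pre depth];
      rewrite ?upd_neq by congruence; rewrite ?Ef, ?Eg, ?Pf; split; try reflexivity;
      cbn [depth]; lia.
  - destruct (proc k d) as [s d'] eqn:Pg.
    destruct s; cbn [apply tuse pre depth];
      rewrite ?upd_neq by congruence; rewrite ?Ef, ?Eg, ?Pg; split; try reflexivity;
      cbn [depth]; lia.
  - cbn [depth]. split; [reflexivity|lia].
Qed.

Lemma teq_sem n m x y : teq n m x y -> forall G,
  apply x G = apply y G /\ depth (tuse x G) = depth (tuse y G).
Proof.
  induction 1 as [a b x y x' y' Ha Hb Hab| |x y z _ IH1 _ IH2|a x x' y y' Ha _ IHx _ IHy];
    intros G.
  - destruct a as [f meth|]; [|contradiction]; destruct b as [g k|]; [|contradiction].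
    apply swap_sem; exact Hab.
  - split; reflexivity.
  - destruct (IH1 G), (IH2 G); split; congruence.
  - destruct a as [f meth|]; [|contradiction].
    cbn [apply tuse]. destruct (G f) as [c|].
    + destruct (proc meth c) as [[|] c']; cbn [pre depth];
        [destruct (IHx (upd G f c'))|destruct (IHy (upd G f c'))]; split; congruence.
    + cbn [depth]. rewrite (proj2 (IHx G)), (proj2 (IHy G)). split; reflexivity.
Qed.

Definition merge (F O : regfam) : regfam :=
  fun f => match F f with Some b => Some b | None => O f end.

Definition out_part (G : regfam) : regfam :=
  fun f => match f with Out _ => G f | _ => None end.

Definition no_out (F : regfam) : Prop := forall i, F (Out i) = None.

Definition only_out (O : regfam) : Prop := forall f, O f <> None -> exists i, f = Out i.

Lemma no_out_upd F f c : no_out F -> F f <> None -> no_out (upd F f c).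
Proof.
  intros HF Hf i. rewrite upd_neq; [apply HF|]. intros E; rewrite <- E in Hf; apply Hf, HF.
Qed.

Lemma only_out_upd O f c : only_out O -> O f <> None -> only_out (upd O f c).
Proof.
  intros HO Hf g Hg. destruct (focus_eq_dec g f) as [->|ne]; [apply HO, Hf|].
  rewrite upd_neq in Hg by exact ne. apply HO, Hg.
Qed.

Lemma merge_upd_l F O f c : merge (upd F f c) O = upd (merge F O) f c.
Proof. extensionality g; unfold merge, upd; destruct focus_eq_dec; reflexivity. Qed.

Lemma merge_upd_r F O f c : F f = None -> merge F (upd O f c) = upd (merge F O) f c.
Proof.
  intros Hf; extensionality g; unfold merge, upd.
  destruct focus_eq_dec as [->|]; [rewrite Hf|]; reflexivity.
Qed.

Lemma apply_use_merge x : forall F O, no_out F -> only_out O ->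
  apply (use x F) O = out_part (apply x (merge F O)).
Proof.
  induction x as [| |x IHx [f meth|f meth r] y IHy]; intros F O HF HO.
  - extensionality g; unfold out_part, merge; cbn [use apply].
    destruct g as [i|i|i]; [| |rewrite HF; reflexivity];
      (destruct (O _) eqn:E; [|reflexivity]);
      destruct (HO _ ltac:(rewrite E; discriminate)); discriminate.
  - extensionality g; destruct g; reflexivity.
  - cbn [use apply]. unfold merge at 1.
    destruct (F f) as [c|] eqn:Ff.
    + assert (HF' : forall c', no_out (upd F f c'))
        by (intros; apply no_out_upd; [exact HF|congruence]).
      destruct (proc meth c) as [[|] c']; rewrite <- merge_upd_l;
        [apply IHx|apply IHy]; auto.
    + cbn [apply]. destruct (O f) as [c|] eqn:Of.
      * assert (HO' : forall c', only_out (upd O f c'))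
          by (intros; apply only_out_upd; [exact HO|congruence]).
        destruct (proc meth c) as [[|] c']; rewrite <- merge_upd_r by exact Ff;
          [apply IHx|apply IHy]; auto.
      * extensionality g; destruct g; reflexivity.
  - exact (IHx F O HF HO).
Qed.

Lemma tuse_tuse_merge x : forall F O, no_out F -> only_out O ->
  tuse (tuse x F) O = tuse x (merge F O).
Proof.
  induction x as [| |x IHx [f meth|f meth r] y IHy]; intros F O HF HO;
    try reflexivity.
  - cbn [tuse]. unfold merge at 1.
    destruct (F f) as [c|] eqn:Ff.
    + assert (HF' : forall c', no_out (upd F f c'))
        by (intros; apply no_out_upd; [exact HF|congruence]).
      destruct (proc meth c) as [[|] c']; cbn [tuse pre]; rewrite <- merge_upd_l;
        [rewrite IHx|rewrite IHy]; auto.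
    + cbn [tuse]. destruct (O f) as [c|] eqn:Of.
      * assert (HO' : forall c', only_out (upd O f c'))
          by (intros; apply only_out_upd; [exact HO|congruence]).
        destruct (proc meth c) as [[|] c']; rewrite <- merge_upd_r by exact Ff;
          [rewrite IHx|rewrite IHy]; auto.
      * rewrite IHx, IHy by assumption. reflexivity.
  - cbn [tuse pre]. rewrite IHx by assumption. reflexivity.
Qed.

Definition initial_fam (n m l : nat) (b c : nat -> bool) : regfam :=
  merge (fam_IA n l b c) (fam_O m).

(* Larger [l] must remain admissible so that witnesses of two steps compose. *)
Definition sem_equiv (n m : nat) (x y : thread) : Prop :=
  exists L, forall l, L <= l -> forall b', exists b'', forall b,
    out_part (apply x (initial_fam n m l b b')) = out_part (apply y (initial_fam n m l b b''))
    /\ depth (tuse x (initial_fam n m l b b')) = depth (tuse y (initial_fam n m l b b'')).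

Lemma sem_equiv_of_sem n m x y :
  (forall G, apply x G = apply y G /\ depth (tuse x G) = depth (tuse y G)) ->
  sem_equiv n m x y.
Proof.
  intros Hxy. exists 0. intros l _ b'. exists b'. intros b.
  destruct (Hxy (initial_fam n m l b b')) as [-> ->]. split; reflexivity.
Qed.

Lemma sem_equiv_trans n m x y z :
  sem_equiv n m x y -> sem_equiv n m y z -> sem_equiv n m x z.
Proof.
  intros [L1 H1] [L2 H2]. exists (Nat.max L1 L2). intros l Hl b'.
  destruct (H1 l ltac:(lia) b') as [b1 Hb1].
  destruct (H2 l ltac:(lia) b1) as [b2 Hb2].
  exists b2. intros b. destruct (Hb1 b), (Hb2 b). split; congruence.
Qed.

Lemma out_part_ext F G : (forall i, F (Out i) = G (Out i)) -> out_part F = out_part G.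
Proof. intros H; extensionality f; destruct f; [reflexivity|reflexivity|apply H]. Qed.

Lemma option_map_xorb_false (o : option bool) : option_map (xorb false) o = o.
Proof. destruct o; reflexivity. Qed.

Definition aux_in (I : list nat) (f : focus) : bool :=
  match f with Aux i => if in_dec Nat.eq_dec i I then true else false | _ => false end.

Lemma ext_chi I X : ext (chi I X) = relabel (fun f => f) (aux_in I) (ext X).
Proof.
  rewrite <- ext_relabel. unfold chi. f_equal. apply map_ext.
  intros [f meth|f meth|f meth| |]; try reflexivity;
    destruct f; cbn; try destruct in_dec; reflexivity.
Qed.

Lemma ext_rho r X : ext (rho r X) = relabel (rho_focus r) (fun _ => false) (ext X).
Proof. rewrite <- ext_relabel. reflexivity. Qed.

Lemma sem_equiv_chi n m I X : sem_equiv n m (ext X) (ext (chi I X)).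
Proof.
  rewrite ext_chi. exists 0. intros l _ b'.
  exists (fun i => xorb (aux_in I (Aux i)) (b' i)). intros b.
  assert (HG : relabels (fun f => f) (aux_in I) (fun _ => True)
                 (initial_fam n m l b b')
                 (initial_fam n m l b (fun i => xorb (aux_in I (Aux i)) (b' i)))).
  { intros [i|i|i] _; unfold initial_fam, merge, fam_IA, fam_O; cbv beta iota;
      destruct (_ && _); reflexivity. }
  assert (Htriv : foci_in (fun _ => True) (ext X)).
  { apply ext_foci_in, Forall_forall. intros []; cbn; auto. }
  destruct (relabel_sem (fun f => f) (aux_in I) (fun _ => True)
              (fun f g _ _ E => E) (ext X) _ _ Htriv HG) as [HA HD].
  split; [|symmetry; exact HD].
  apply out_part_ext. intros i. rewrite (HA (Out i) Logic.I).
  symmetry; apply option_map_xorb_false.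
Qed.

Definition aux_index (u : instr) : nat :=
  match u with Plain (Aux i) _ | PTest (Aux i) _ | NTest (Aux i) _ => i | _ => 0 end.

Definition aux_bound (X : list instr) : nat := list_max (map aux_index X).

Definition aux_range (L : nat) (f : focus) : Prop :=
  match f with Aux i => 1 <= i <= L | _ => True end.

Lemma aux_range_mono L L' f : L <= L' -> aux_range L f -> aux_range L' f.
Proof. destruct f; cbn; lia. Qed.

Lemma IS_aux_range n m X : IS n m X -> Forall (instr_foci_in (aux_range (aux_bound X))) X.
Proof.
  intros [_ Hok].
  assert (Hb := proj1 (list_max_le (map aux_index X) (aux_bound X)) (le_n _)).
  rewrite Forall_map in Hb. rewrite Forall_forall in *.
  intros u Hu. specialize (Hok u Hu). specialize (Hb u Hu).
  destruct u as [f meth|f meth|f meth| |]; cbn in *; auto;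
    destruct f, meth; cbn in *; lia.
Qed.

Lemma rho_foci_in_range n m r X l :
  IS n m X -> IS n m (rho r X) -> Nat.max (aux_bound X) (aux_bound (rho r X)) <= l ->
  foci_in (fun f => aux_range l f /\ aux_range l (rho_focus r f)) (ext X).
Proof.
  intros HX HrX Hl.
  assert (H1 := IS_aux_range n m X HX).
  assert (H2 := IS_aux_range n m _ HrX).
  apply (Forall_instr_foci_in_impl _ (aux_range l)) in H1, H2;
    [|intros f; apply aux_range_mono; lia..].
  unfold rho in H2. rewrite Forall_map in H2.
  apply ext_foci_in. rewrite Forall_forall in *. intros u Hu.
  specialize (H1 u Hu). specialize (H2 u Hu).
  destruct u; cbn in *; auto.
Qed.

Fixpoint inv_below (r : nat -> nat) (l j : nat) : nat :=
  match l with
  | 0 => 0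
  | S k => if r (S k) =? j then S k else inv_below r k j
  end.

Lemma inv_below_spec r l i :
  (forall i j, 0 < i -> 0 < j -> r i = r j -> i = j) ->
  1 <= i <= l -> inv_below r l (r i) = i.
Proof.
  intros Hinj. induction l as [|l IH]; intros Hi; [lia|]. cbn.
  destruct (Nat.eqb_spec (r (S l)) (r i)) as [E|NE].
  - apply Hinj; [lia|lia|exact E].
  - apply IH. assert (i <> S l) by congruence. lia.
Qed.

Lemma sem_equiv_rho n m r X :
  IS n m X -> IS n m (rho r X) ->
  (forall i j, 0 < i -> 0 < j -> r i = r j -> i = j) ->
  sem_equiv n m (ext X) (ext (rho r X)).
Proof.
  intros HX HrX Hinj. rewrite ext_rho.
  exists (Nat.max (aux_bound X) (aux_bound (rho r X))). intros l Hl b'.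
  exists (fun j => b' (inv_below r l j)). intros b.
  set (R f := aux_range l f /\ aux_range l (rho_focus r f)).
  assert (HR : foci_in R (ext X)) by (apply rho_foci_in_range with n m; assumption).
  assert (HRinj : forall f g, R f -> R g -> rho_focus r f = rho_focus r g -> f = g).
  { intros [i|i|i] [j|j|j] Hf Hg E; cbn in E; try discriminate; try exact E.
    unfold R in Hf, Hg; cbn in Hf, Hg. injection E as E. f_equal. apply Hinj; lia. }
  assert (HG : relabels (rho_focus r) (fun _ => false) R
                 (initial_fam n m l b b') (initial_fam n m l b (fun j => b' (inv_below r l j)))).
  { intros f Hf. rewrite option_map_xorb_false.
    destruct f as [i|i|i]; try reflexivity.
    destruct Hf as [Hi Hri]; cbn in Hi, Hri.
    unfold initial_fam, merge, fam_IA; cbn [rho_focus].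
    rewrite (proj2 (Nat.leb_le 1 i)), (proj2 (Nat.leb_le i l)),
      (proj2 (Nat.leb_le 1 (r i))), (proj2 (Nat.leb_le (r i) l)) by lia.
    cbn. rewrite inv_below_spec by assumption. reflexivity. }
  destruct (relabel_sem _ _ R HRinj (ext X) _ _ HR HG) as [HA HD].
  split; [|symmetry; exact HD].
  apply out_part_ext. intros i.
  specialize (HA (Out i) (conj Logic.I Logic.I)). cbn [rho_focus] in HA.
  rewrite HA. symmetry; apply option_map_xorb_false.
Qed.

Lemma sa_equiv_sem n m X Y : sa_equiv n m X Y -> sem_equiv n m (ext X) (ext Y).
Proof.
  induction 1 as [X Y _ _ E|X Y I _ _ _ ->|X Y r HX HY [_ [Hinj _]] ->|X Y _ _ Ht
                 |X Y Z _ IH1 _ IH2].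
  - rewrite E. apply sem_equiv_of_sem. split; reflexivity.
  - apply sem_equiv_chi.
  - apply sem_equiv_rho; assumption.
  - apply sem_equiv_of_sem, (teq_sem n m _ _ Ht).
  - exact (sem_equiv_trans _ _ _ _ _ IH1 IH2).
Qed.

Theorem theorem1 :
  forall (n m : nat) (X Y : list instr),
    IS n m X -> IS n m Y ->
    sa_equiv n m X Y ->
    exists l : nat,
      forall b' : nat -> bool, exists b'' : nat -> bool,
        forall b : nat -> bool,
          apply (use (ext X) (fam_IA n l b b')) (fam_O m)
            = apply (use (ext Y) (fam_IA n l b b'')) (fam_O m)
          /\ depth (tuse (tuse (ext X) (fam_IA n l b b')) (fam_O m))
             = depth (tuse (tuse (ext Y) (fam_IA n l b b'')) (fam_O m)).
Proof.
  intros n m X Y _ _ HXY.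
  destruct (sa_equiv_sem n m X Y HXY) as [L HL]. exists L. intros b'.
  destruct (HL L (le_n L) b') as [b'' Hb'']. exists b''. intros b.
  assert (HI : forall c, no_out (fam_IA n L b c)) by (intros c i; reflexivity).
  assert (HO : only_out (fam_O m)) by (intros [i|i|i] H; [contradiction H..|exists i]; reflexivity).
  rewrite !apply_use_merge, !tuse_tuse_merge by auto.
  exact (Hb'' b).
Qed.
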